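(* Let $G=\langle S_k\mid K\rangle$ be a finitely generated semigroup as described in the context, $\mathcal{A}$ a finite alphabet and $X\subseteq\mathcal{A}^G$ a tree shift. If $K$ is primitive, then for every $1\le i\le k$ the limit $\lim_{n\to\infty}\log p^{(s_i)}_n/|\bar{\Delta}^{(s_i)}_n|$ exists and \[\lim_{n\to\infty}\frac{\log p^{(s_i)}_n}{|\bar{\Delta}^{(s_i)}_n|}=\inf_{n\ge0}\max_{1\le j\le k}\frac{\log p^{(s_j)}_n}{|\bar{\Delta}^{(s_j)}_n|}.\]
   Context: Let $K$ be a $k\times k$ matrix with entries in $\{0,1\}$ indexed by $S_k=\{s_1,\dots,s_k\}$, and let $G=\langle S_k\mid K\rangle$ be the semigroup generated by $S_k$ subject to the relations $s_is_j=1_G$ if and only if $K(s_i,s_j)=0$ ($1_G$ the identity). Every $g\in G$ has a unique minimal representation $g=g_1g_2\cdots g_n$ with $g_l\in S_k$ and $K(g_l,g_{l+1})=1$; its length is $|g|=n$ (with $|1_G|=0$). For $g\in G$ and $n\ge0$ the $n$-semiball at $g$ is $\bar{\Delta}^{(g)}_n=\{gh: h\in G,\ |h|\le n,\ |gh|=|g|+|h|\}$. For a finite alphabet $\mathcal{A}$, a pattern is a map $u:H\to\mathcal{A}$ with $H\subset G$ finite; $u$ is accepted by $t\in\mathcal{A}^G$ if there is $g\in G$ with $t_{gh}=u_h$ for all $h\in H$. A tree shift is a subset $X\subseteq\mathcal{A}^G$ consisting of all $t$ that accept no pattern from some fixed set $\mathcal{F}$ of patterns. $p^{(g)}_n$ denotes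 the number of patterns $u\in\mathcal{A}^{\bar{\Delta}^{(g)}_n}$ accepted by some $t\in X$. A nonnegative square matrix is primitive if some power of it has all entries positive. *)

From HB Require Import structures.
From mathcomp Require Import all_boot all_order all_algebra.
From mathcomp Require Import boolp classical_sets reals exp topology normedtype sequences.

Set Implicit Arguments.
Unset Strict Implicit.
Unset Printing Implicit Defensive.

Import Order.TTheory GRing.Theory Num.Theory.

Section Semigroup.
Variables (k : nat) (K : 'I_k -> 'I_k -> bool).

Definition adm (w : seq 'I_k) : bool := sorted (fun a b => K a b) w.

(* Elements of G = <S_k | K>, identified with their minimal representations. *)
Definition Gelt := {w : seq 'I_k | adm w}.

(* Multiply a reduced word on the right by a generator s: if the last letter a
   satisfies K(a,s) = 0 then a s = 1 cancels, otherwise s is appended. *)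
Definition push (w : seq 'I_k) (s : 'I_k) : seq 'I_k :=
  match rev w with
  | a :: r => if K a s then rcons w s else rev r
  | [::] => [:: s]
  end.

Lemma adm_push w s : adm w -> adm (push w s).
Proof.
rewrite /push; case/lastP: w => [|w a] //=.
rewrite rev_rcons revK /adm => Hw.
case: ifP => Kas.
  case: w Hw => [|b w] /=; first by rewrite Kas.
  by move=> Hw; rewrite rcons_path last_rcons Hw Kas.
case: w Hw => [|b w] //=.
by rewrite rcons_path => /andP [].
Qed.

Definition red (w : seq 'I_k) : seq 'I_k := foldl push [::] w.

Lemma adm_red w : adm (red w).
Proof.
rewrite /red; have : adm [::] by [].
elim: w [::] => [|s w IH] v //= Hv.
by apply: IH; apply: adm_push.
Qed.

Definition gmul (g h : Gelt) : Gelt := exist _ (red (val g ++ val h)) (adm_red _).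

Definition glen (g : Gelt) : nat := size (val g).

Definition gen (i : 'I_k) : Gelt := exist (fun w => adm w) [:: i] isT.

Definition words (m : nat) : seq (seq 'I_k) :=
  map (fun t : m.-tuple 'I_k => tval t) (enum {: m.-tuple 'I_k}).

Definition ballG (n : nat) : seq Gelt :=
  pmap insub (flatten [seq words m | m <- iota 0 n.+1]).

Definition semiball (g : Gelt) (n : nat) : seq Gelt :=
  undup [seq gmul g h | h <- ballG n & glen (gmul g h) == glen g + glen h].

Definition Kmx : 'M[int]_k := \matrix_(i, j) (Posz (K i j : nat)).
Definition primitive : Prop :=
  exists m : nat, (0 < m)%N /\
    forall i j : 'I_k, (0 < (iter m (mulmx Kmx) 1%:M) i j)%R.

Variable A : finType.

Definition config := Gelt -> A.

(* A pattern u : H -> A with H a finite subset of G (given as a list). *)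
Definition pattern := (seq Gelt * (Gelt -> A))%type.

Definition accepts (t : config) (u : pattern) : Prop :=
  exists g : Gelt, forall h, h \in u.1 -> t (gmul g h) = u.2 h.

Definition is_tree_shift (X : set config) : Prop :=
  exists F : set pattern, forall t, X t <-> (forall u, F u -> ~ accepts t u).

(* p^{(g)}_n: number of patterns on the n-semiball at g accepted by some t in X.
   A pattern on the semiball D is encoded by its values on the enumeration of D. *)
Definition pcount (X : set config) (g : Gelt) (n : nat) : nat :=
  let D := semiball g n in
  #|[set u : {ffun 'I_(size D) -> A} |
      `[< exists t, X t /\ exists g' : Gelt,
            forall i : 'I_(size D), t (gmul g' (nth g D i)) = u i >]]|.

Definition pratio (R : realType) (X : set config) (i : 'I_k) (n : nat) : R :=
  (ln (pcount X (gen i) n)%:R / (size (semiball (gen i) n))%:R)%R.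

End Semigroup.

From HB Require Import structures.
From mathcomp Require Import all_boot all_order all_algebra.
From mathcomp Require Import boolp classical_sets reals exp topology normedtype sequences.
From mathcomp Require Import zify lra.
Import Order.TTheory GRing.Theory Num.Theory.
Import numFieldNormedType.Exports.
Set Implicit Arguments.
Unset Strict Implicit.
Unset Printing Implicit Defensive.

(* Write s_j(n) for the size of the n-semiball at s_j and L_j(n) for log p^{(s_j)}_n.
   A word of the (n+M+1)-semiball at s_j either lies in the n-semiball or is a word of
   length n+1 followed by a word of the M-semiball at its last letter b, and a pattern
   is determined by its restrictions to these pieces; hence
     s_j(n+M+1) = s_j(n) + sum_b s_b(M)  and  L_j(n+M+1) <= L_j(n) + sum_b L_b(M),
   the sums running over the letters at depth n+1 below s_j.  Iterating these gives
   max_j L_j(N)/s_j(N) <= max_j L_j(M)/s_j(M) + O(1/N), so the maximal ratio converges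
   to its infimum.  Primitivity of K puts every letter at some fixed depth m+1 below
   every letter; this makes all the s_i(n) comparable and bounds the gap between each
   ratio L_i(n)/s_i(n) and the maximal one by O(1/n) plus a multiple of the
   oscillation of the maximal ratio between n and n+m+1. *)

Section ReducedWords.
Variables (k : nat) (K : 'I_k -> 'I_k -> bool).

Lemma adm_cons2 a b w : adm K [:: a, b & w] = K a b && adm K (b :: w).
Proof. by []. Qed.

Lemma adm_behead w : adm K w -> adm K (behead w).
Proof. by case: w => [|a [|b w]] //; rewrite adm_cons2 => /andP[]. Qed.

Lemma push_rcons w s : adm K (rcons w s) -> push K w s = rcons w s.
Proof.
case/lastP: w => [|w a] //; rewrite /push rev_rcons.
case: w => [|b w] /=; first by case/andP => ->.
by rewrite !rcons_path last_rcons => /andP[_ ->].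
Qed.

Lemma foldl_push_adm w v : adm K (w ++ v) -> foldl (push K) w v = w ++ v.
Proof.
elim: v w => [|s v IH] w /=; first by rewrite cats0.
rewrite -cat_rcons => wsv; rewrite push_rcons ?IH //.
by case: (rcons w s) wsv => // a u; rewrite /adm /= cat_path => /andP[].
Qed.

Lemma red_id w : adm K w -> red K w = w.
Proof. exact: (@foldl_push_adm [::]). Qed.

Lemma red_cat u v : red K (u ++ v) = foldl (push K) (red K u) v.
Proof. exact: foldl_cat. Qed.

Lemma red_cons j w : adm K w ->
  red K (j :: w) = if adm K (j :: w) then j :: w else behead w.
Proof.
case: w => [|b w] // adm_bw; rewrite /red /= {2}/push /=.
have -> : path (fun a b => K a b) b w = true := adm_bw.
rewrite andbT; case: ifP => Kjb; last exact: red_id (adm_behead adm_bw).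
by rewrite foldl_push_adm // adm_cons2 Kjb.
Qed.

Definition gmulw (g : Gelt K) (w : seq 'I_k) : Gelt K :=
  exist (fun w => adm K w) (red K (val g ++ w)) (adm_red K _).

Lemma gmul_cat g x y w : val x = w ++ val y -> gmul g x = gmul (gmulw g w) y.
Proof.
move=> xE; apply: val_inj => /=.
by rewrite xE catA [in RHS]red_cat (red_id (adm_red _ _)) -red_cat.
Qed.

End ReducedWords.

Section Layers.
Variables (k : nat) (K : 'I_k -> 'I_k -> bool).

Fixpoint layer (n : nat) (j : 'I_k) : seq (seq 'I_k) :=
  if n is n'.+1 then [seq b :: h | b <- [seq b <- enum 'I_k | K j b], h <- layer n' b]
  else [:: [::]].

Lemma mem_layer n j h : (h \in layer n j) = (size h == n) && adm K (j :: h).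
Proof.
elim: n j h => [|n IH] j [|b h] //.
  by apply/allpairsPdep => -[? [? [_ _ //]]].
rewrite [size _]/= eqSS adm_cons2 andbCA -IH; apply/allpairsPdep/andP.
  by case=> b' [h' [+ + [-> ->]]]; rewrite mem_filter => /andP[].
by case=> Kjb hl; exists b, h; rewrite mem_filter Kjb mem_enum.
Qed.

Lemma layer_uniq n j : uniq (layer n j).
Proof.
elim: n j => [|n IH] j //=; apply: allpairs_uniq_dep => //.
  exact/filter_uniq/enum_uniq.
by move=> [b h] [b' h'] _ _ /= [-> ->].
Qed.

Lemma size_layer_add n d j :
  size (layer (n + d) j) = \sum_(w <- layer n j) size (layer d (last j w)).
Proof.
elim: n j => [|n IH] j; first by rewrite big_seq1.
rewrite addSn /= size_allpairs_dep big_allpairs_dep sumnE big_map.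
by apply: eq_bigr => b _; rewrite IH.
Qed.

Definition front (j : 'I_k) (n : nat) : seq 'I_k := [seq last j w | w <- layer n.+1 j].

Lemma iter_Kmx_gt0_layer m i j : (0 < (iter m (mulmx (Kmx K)) 1%:M) i j)%R ->
  exists2 w, w \in layer m i & last i w = j.
Proof.
elim: m i => [|m IH] i.
  by rewrite /= mxE; case: eqP => [<-|] //= _; exists [::].
rewrite iterS mxE => sum_gt0.
have /existsP[l] : [exists l, 0 < Kmx K i l * iter m (mulmx (Kmx K)) 1%:M l j]%R.
  apply: contraTT sum_gt0 => /existsPn term_le0.
  by rewrite -leNgt sumr_le0 // => l _; rewrite leNgt term_le0.
rewrite mxE; case Kil: (K i l); rewrite ?mul0r ?ltxx // mul1r => /IH[w wl wj].
by exists (l :: w); rewrite // mem_layer adm_cons2 Kil [size _]/= eqSS -mem_layer.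
Qed.

Lemma primitive_front : primitive K -> exists m, forall j c, c \in front j m.
Proof.
case=> m [m_gt0 Kpos]; exists m.-1 => j c.
have [w wl <-] := iter_Kmx_gt0_layer (Kpos j c).
by apply: map_f; rewrite prednK.
Qed.

Lemma front_succ j n c : c \in front j n -> exists b, K j b.
Proof.
case/mapP=> -[|b w]; rewrite mem_layer // adm_cons2 => /andP[_ /andP[Kjb _]] _.
by exists b.
Qed.

End Layers.

Section Semiballs.
Variables (k : nat) (K : 'I_k -> 'I_k -> bool).

Lemma mem_words m w : (w \in words k m) = (size w == m).
Proof.
apply/mapP/eqP => [[t _ ->]|wm]; first exact: size_tuple.
by exists (Tuple (introT eqP wm)); rewrite ?mem_enum.
Qed.

Lemma mem_ballG n h : (h \in ballG K n) = (size (val h) <= n).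
Proof.
rewrite mem_pmap_sub; apply/flatten_mapP/idP => [[m]|hn].
  by rewrite mem_iota ltnS mem_words => mn /eqP ->.
by exists (size (val h)); rewrite ?mem_iota ?ltnS ?mem_words.
Qed.

Lemma mem_semiball j n d :
  (d \in semiball (gen K j) n) = (ohead (val d) == Some j) && (size (val d) <= n.+1).
Proof.
rewrite mem_undup; apply/mapP/andP.
  case=> h; rewrite mem_filter mem_ballG => /andP[+ hn] ->.
  rewrite /glen /= red_cons ?(valP h) //; case: ifP => _ /=; first by rewrite eqxx ltnS.
  by rewrite size_behead => /eqP; lia.
case: d => -[|a w] adm_aw [/eqP ohead_d wn] //; case: ohead_d => <-.
have adm_w := adm_behead adm_aw.
have gmulE : gmul (gen K a) (exist _ w adm_w) = exist _ (a :: w) adm_aw.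
  by apply: val_inj; rewrite /= red_cons // adm_aw.
exists (exist _ w adm_w); last by rewrite gmulE.
by rewrite mem_filter mem_ballG gmulE /glen /= eqxx.
Qed.

Lemma semiball_words j n : perm_eq (map val (semiball (gen K j) n))
  [seq j :: h | m <- iota 0 n.+1, h <- layer K m j].
Proof.
apply: uniq_perm.
- by rewrite (map_inj_uniq val_inj) undup_uniq.
- apply: allpairs_uniq_dep => [|m _|]; [exact: iota_uniq | exact: layer_uniq |].
  move=> _ _ /allpairsPdep[m [h [_ + ->]]] /allpairsPdep[m' [h' [_ + ->]]] /=.
  by rewrite !mem_layer => /andP[/eqP <- _] /andP[/eqP <- _] [->].
move=> w; apply/mapP/allpairsPdep => [[d + ->]|[m [h [+ + ->]]]].
  rewrite mem_semiball; case: d => -[|a h] // adm_ah /andP[/eqP[aj] hn].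
  by exists (size h), h; rewrite mem_iota mem_layer eqxx -aj adm_ah add0n.
rewrite mem_iota ltnS mem_layer => mn /andP[/eqP hm adm_jh].
by exists (exist (adm K) _ adm_jh); rewrite // mem_semiball /= eqxx ltnS hm.
Qed.

Lemma size_semiball j n :
  size (semiball (gen K j) n) = \sum_(m < n.+1) size (layer K m j).
Proof.
rewrite -(size_map val) (perm_size (semiball_words j n)) size_allpairs_dep.
rewrite sumnE big_map -(big_mkord xpredT (fun m => size (layer K m j))).
by rewrite /index_iota subn0.
Qed.

Lemma size_semiball_add j n M : size (semiball (gen K j) (n + M).+1) =
  size (semiball (gen K j) n) + \sum_(b <- front K j n) size (semiball (gen K b) M).
Proof.
rewrite !size_semiball; have -> : (n + M).+2 = n.+1 + M.+1 by rewrite addSn addnS.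
rewrite big_split_ord /= big_map; congr addn.
under eq_bigr => i _ do rewrite (size_layer_add K n.+1 i j).
rewrite exchange_big /=.
by apply: eq_bigr => w _; rewrite size_semiball.
Qed.

Lemma semiball_cover j n M d : d \in semiball (gen K j) (n + M).+1 ->
  d \in semiball (gen K j) n \/
  exists2 w, w \in layer K n.+1 j &
    exists2 e, e \in semiball (gen K (last j w)) M & val d = belast j w ++ val e.
Proof.
rewrite !mem_semiball; case: d => -[|a h] adm_jh; first by case/andP.
case/andP => /eqP[aj] hnM; subst a; rewrite /= ltnS in hnM.
have [hn|nh] := leqP (size h) n; [left | right]; first by rewrite eqxx ltnS.
pose w := take n.+1 h; pose r := drop n.+1 h.
have /andP[adm_w adm_r] :
    path (fun a b => K a b) j w && path (fun a b => K a b) (last j w) r.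
  by rewrite -cat_path cat_take_drop.
exists w; first by rewrite mem_layer size_takel // eqxx.
exists (exist (adm K) (last j w :: r) adm_r).
  by rewrite mem_semiball /= eqxx ltnS size_drop; lia.
by rewrite /= -cat_rcons -lastI cat_cons cat_take_drop.
Qed.

Section Successors.
Hypothesis succ : forall a, exists b, K a b.

Lemma size_layer_gt0 n j : 0 < size (layer K n j).
Proof.
elim: n j => [|n IH] j //; have [b Kjb] := succ j.
have /hasP[h hl _] : has predT (layer K n b) by rewrite has_predT.
rewrite -has_predT; apply/hasP; exists (b :: h) => //.
by move: hl; rewrite !mem_layer adm_cons2 Kjb [size _]/= eqSS.
Qed.

Lemma size_semiball_ge j n : n.+1 <= size (semiball (gen K j) n).
Proof.
rewrite size_semiball -[X in X <= _]card_ord -sum1_card.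
by apply: leq_sum => m _; apply: size_layer_gt0.
Qed.

End Successors.

End Semiballs.

Section Patterns.
Variables (k : nat) (K : 'I_k -> 'I_k -> bool) (A : finType) (X : set (config K A)).

Definition window (D : seq (Gelt K)) (t : config K A) (g : Gelt K) :
    {ffun 'I_(size D) -> A} :=
  [ffun i => t (gmul g (tnth (in_tuple D) i))].

Definition patterns (D : seq (Gelt K)) : {set {ffun 'I_(size D) -> A}} :=
  [set u | `[< exists2 t, X t & exists g, window D t g = u >]].

Lemma pcountE g n : pcount X g n = #|patterns (semiball g n)|.
Proof.
apply: eq_card => u; rewrite !inE; apply/asboolP/asboolP.
  case=> t [Xt [g' tu]]; exists t => //; exists g'; apply/ffunP => i.
  by rewrite ffunE (tnth_nth g) tu.
case=> t Xt [g' <-]; exists t; split => //; exists g' => i.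
by rewrite ffunE (tnth_nth g).
Qed.

Lemma window_index D y : y \in D -> exists i, forall t g, window D t g i = t (gmul g y).
Proof.
by move=> yD; have /tnthP[i ->] : y \in in_tuple D := yD; exists i => t g; rewrite ffunE.
Qed.

Lemma card_patterns_cover2 (D D1 D2 : seq (Gelt K)) (w : seq 'I_k) :
  (forall x, x \in D -> x \in D2 \/ exists2 y, y \in D1 & val x = w ++ val y) ->
  #|patterns D| <= #|patterns D1| * #|patterns D2|.
Proof.
move=> cover.
have [->|[u0]] := set_0Vmem (patterns D); first by rewrite cards0.
rewrite inE => /asboolP[t0 _ [g0 _]].
have /choice[wit witP] : forall u, exists tg : config K A * Gelt K,
    u \in patterns D -> X tg.1 /\ window D tg.1 tg.2 = u.
  move=> u; case: (boolP (u \in patterns D)) => [|_]; last by exists (t0, g0).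
  by rewrite inE => /asboolP[t Xt [g tgu]]; exists (t, g).
pose F u := (window D1 (wit u).1 (gmulw (wit u).2 w), window D2 (wit u).1 (wit u).2).
have F_inj : {in patterns D &, injective F}.
  move=> u v /witP[_ eu] /witP[_ ev] [F1 F2]; rewrite -eu -ev; apply/ffunP => i.
  rewrite !ffunE; have [xD2|[y yD1 xE]] := cover _ (mem_tnth i (in_tuple D)).
    by have [i2 wi2] := window_index xD2; rewrite -!wi2 F2.
  by rewrite !(gmul_cat _ xE); have [i1 wi1] := window_index yD1; rewrite -!wi1 F1.
rewrite -(card_in_imset F_inj) -cardsX.
apply/subset_leq_card/fintype.subsetP => _ /finset.imsetP[u uD ->].
have [Xu _] := witP u uD; rewrite !inE; apply/andP; split; apply/asboolP.
  by exists (wit u).1; last by exists (gmulw (wit u).2 w).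
by exists (wit u).1; last by exists (wit u).2.
Qed.

Lemma card_patterns_nil : #|patterns [::]| <= 1.
Proof. by apply: leq_trans (max_card _) _; rewrite card_ffun card_ord. Qed.

Lemma card_patterns_cover (D : seq (Gelt K)) (B : seq (seq 'I_k * seq (Gelt K))) :
  (forall x, x \in D -> exists2 b, b \in B & exists2 y, y \in b.2 & val x = b.1 ++ val y) ->
  #|patterns D| <= \prod_(b <- B) #|patterns b.2|.
Proof.
elim: B D => [|b B IH] D cover.
  rewrite big_nil; case: D cover => [_|x D /(_ x (mem_head x D))[]//].
  exact: card_patterns_nil.
pose covered (x : Gelt K) := has (fun y => val x == b.1 ++ val y) b.2.
set D2 := [seq x <- D | ~~ covered x].
rewrite big_cons (@leq_trans (#|patterns b.2| * #|patterns D2|)) //.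
  apply: card_patterns_cover2 (b.1) _ => x xD; case cx: (covered x); [right | left].
    by case/hasP: cx => y yb /eqP; exists y.
  by rewrite mem_filter cx.
rewrite leq_mul2l IH ?orbT // => x; rewrite mem_filter => /andP[ncx xD].
have [b' + [y yb' xE]] := cover x xD.
rewrite inE => /predU1P[eb|]; last by exists b' => //; exists y.
by case/negP: ncx; apply/hasP; exists y; rewrite -?eb ?xE.
Qed.

Lemma pcount_split j n M :
  pcount X (gen K j) (n + M).+1 <=
    pcount X (gen K j) n * \prod_(b <- front K j n) pcount X (gen K b) M.
Proof.
pose B := ([::], semiball (gen K j) n) ::
  [seq (belast j w, semiball (gen K (last j w)) M) | w <- layer K n.+1 j].
have := @card_patterns_cover (semiball (gen K j) (n + M).+1) B.
rewrite big_cons big_map big_map -!pcountE.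
under eq_bigr do rewrite -pcountE.
apply=> d /semiball_cover[dn|[w wl [e ed dE]]].
  by exists ([::], semiball (gen K j) n); [exact: mem_head | exists d].
exists (belast j w, semiball (gen K (last j w)) M); last by exists e.
by rewrite inE map_f ?orbT.
Qed.

Lemma pcount_gt0 t g n : X t -> 0 < pcount X g n.
Proof.
move=> Xt; rewrite pcountE; apply/card_gt0P; exists (window (semiball g n) t g).
by rewrite inE; apply/asboolP; exists t => //; exists g.
Qed.

Lemma pcount_eq0 g n : ~ (exists t, X t) -> pcount X g n = 0.
Proof.
move=> noX; apply: eq_card0 => u; rewrite !inE; apply/asboolP => -[t [Xt _]].
by apply: noX; exists t.
Qed.

End Patterns.

Local Open Scope classical_set_scope.
Local Open Scope ring_scope.

Lemma ln_prod (R : realType) (I : Type) (r : seq I) (F : I -> R) :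
  (forall i, 0 < F i) -> ln (\prod_(i <- r) F i) = \sum_(i <- r) ln (F i).
Proof.
move=> F_gt0; elim: r => [|i r IH]; first by rewrite !big_nil ln1.
by rewrite !big_cons lnM ?IH // posrE ?F_gt0 ?prodr_gt0.
Qed.

Lemma ln_nat_ge0 (R : realType) (n : nat) : 0 <= ln (n%:R : R).
Proof. by case: n => [|n]; [rewrite ln0 | apply: ln_ge0; rewrite ler1n]. Qed.

Lemma ln_pcount_split (R : realType) k (K : 'I_k -> 'I_k -> bool) (A : finType)
    (X : set (config K A)) j n M :
  ln (pcount X (gen K j) (n + M)%N.+1)%:R <=
    ln (pcount X (gen K j) n)%:R +
      \sum_(b <- front K j n) ln (pcount X (gen K b) M)%:R :> R.
Proof.
have [[t Xt]|noX] := pselect (exists t, X t); last first.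
  by rewrite !pcount_eq0 // ln0 // add0r big1 // => b _; rewrite pcount_eq0 // ln0.
have p_gt0 g m : 0 < (pcount X g m)%:R :> R by rewrite ltr0n (pcount_gt0 _ _ Xt).
rewrite -ln_prod // -lnM ?posrE ?prodr_gt0 // ler_ln ?posrE ?mulr_gt0 ?prodr_gt0 //.
by rewrite -natr_prod -natrM ler_nat pcount_split.
Qed.


Lemma ler_sum_mem (R : numDomainType) (I : eqType) (r : seq I) (f : I -> R) x :
  x \in r -> (forall y, 0 <= f y) -> f x <= \sum_(y <- r) f y.
Proof. by move=> xr f_ge0; rewrite (big_rem _ xr) /= lerDl sumr_ge0. Qed.

Lemma div_succ_cvg0 (R : realType) (C : R) : (fun n : nat => C / n.+1%:R) @ \oo --> 0.
Proof. by rewrite -(mulr0 C); apply: cvgMl_tmp; exact: cvg_harmonic. Qed.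

(* s j n and L j n stand for the size of the n-semiball at s_j and for log p^{(s_j)}_n;
   F j n lists, with multiplicity, the letters at depth n+1 below j. *)
Section RatioLimit.
Variables (R : realType) (k : nat) (s L : 'I_k -> nat -> R) (F : 'I_k -> nat -> seq 'I_k).

Hypothesis s_ge : forall j n, n.+1%:R <= s j n.
Hypothesis L_ge0 : forall j n, 0 <= L j n.
Hypothesis s_split : forall j n M, s j (n + M)%N.+1 = s j n + \sum_(b <- F j n) s b M.
Hypothesis L_split : forall j n M, L j (n + M)%N.+1 <= L j n + \sum_(b <- F j n) L b M.

Definition ratio j n := L j n / s j n.
Definition max_ratio n := \big[Num.max/0]_(j < k) ratio j n.

Lemma s_gt0 j n : 0 < s j n.
Proof. exact: lt_le_trans (s_ge j n). Qed.

Lemma ratio_ge0 j n : 0 <= ratio j n.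
Proof. by rewrite divr_ge0 // ltW ?s_gt0. Qed.

Lemma ratio_le_max j n : ratio j n <= max_ratio n.
Proof. exact: le_bigmax. Qed.

Lemma max_ratio_ge0 n : 0 <= max_ratio n.
Proof. exact: bigmax_ge_id. Qed.

Lemma L_ratioE j n : L j n = ratio j n * s j n.
Proof. by rewrite divfK // gt_eqF ?s_gt0. Qed.

Lemma ler_div_succ C j n : 0 <= C -> C <= C / n.+1%:R * s j n.
Proof.
move=> C_ge0; have succ_neq0 : n.+1%:R != 0 :> R by rewrite pnatr_eq0.
rewrite -[X in X <= _](divfK succ_neq0 C).
by apply: ler_wpM2l (s_ge j n); rewrite divr_ge0.
Qed.

Lemma excess_le M N j :
  L j N - max_ratio M * s j N <= \sum_(r < M.+1) \sum_(i < k) L i r.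
Proof.
elim/ltn_ind: N j => N IH j; have [NM|MN] := leqP N M.
  have L_le : L j N <= \sum_(r < M.+1) \sum_(i < k) L i r.
    rewrite (bigD1 (Ordinal (NM : (N < M.+1)%N))) //= (bigD1 j) //= -addrA lerDl.
    by apply: addr_ge0; apply: sumr_ge0 => *; rewrite ?sumr_ge0.
  have := mulr_ge0 (max_ratio_ge0 M) (ltW (s_gt0 j N)); lra.
set n := (N - M.+1)%N; have n_lt : (n < N)%N by lia.
have -> : N = (n + M).+1 by lia.
have front_le : \sum_(b <- F j n) (L b M - max_ratio M * s b M) <= 0.
  by apply: sumr_le0 => b _; rewrite subr_le0 L_ratioE ler_pM2r ?s_gt0 ?ratio_le_max.
move: front_le (IH n n_lt j) (L_split j n M); rewrite s_split mulrDr sumrB -mulr_sumr.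
lra.
Qed.

Lemma max_ratio_le M :
  exists2 C, 0 <= C & forall N, max_ratio N <= max_ratio M + C / N.+1%:R.
Proof.
set C := \sum_(r < M.+1) \sum_(i < k) L i r.
have C_ge0 : 0 <= C by apply: sumr_ge0 => *; apply: sumr_ge0.
exists C => // N; apply: bigmax_le => [|j _].
  by rewrite addr_ge0 ?max_ratio_ge0 ?divr_ge0.
rewrite /ratio ler_pdivrMr ?s_gt0 // mulrDl.
move: (excess_le M N j) (ler_div_succ j N C_ge0); rewrite -/C.
move: (C / N.+1%:R * s j N) => c; lra.
Qed.

Lemma max_ratio_cvg : max_ratio @ \oo --> inf [set x | exists n, x = max_ratio n].
Proof.
set S := [set x | exists n, x = max_ratio n].
have S_lb : has_lbound S by exists 0 => _ [n ->]; exact: max_ratio_ge0.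
have inf_le n : inf S <= max_ratio n by apply: ge_inf => //; exists n.
apply/cvgrPdist_le => e e_gt0; have e2_gt0 : 0 < e / 2 by rewrite divr_gt0.
have S_ne : S !=set0 by exists (max_ratio 0), 0%N.
have [_ [M ->] MS] := inf_adherent e2_gt0 (conj S_ne S_lb).
have [C C_ge0 HC] := max_ratio_le M.
near=> N; have small : C / N.+1%:R < e / 2.
  by near: N; exact: cvgr_lt 0 (div_succ_cvg0 C) _ e2_gt0.
move: (HC N) (inf_le N) MS small; move: (C / N.+1%:R) => c.
by rewrite ler_distl => *; apply/andP; split; lra.
Unshelve. all: end_near.
Qed.

Variable m : nat.
Hypothesis F_full : forall j c, c \in F j m.

Local Notation smax n := (\big[Num.max/0]_(c < k) s c n).

Lemma smax_le_s i n : smax n <= s i (m + n).+1.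
Proof.
apply: bigmax_le => [|c _]; first exact/ltW/s_gt0.
rewrite s_split; apply: le_trans (ler_sum_mem (F_full i c) (fun b => ltW (s_gt0 b n))) _.
by rewrite lerDr ltW ?s_gt0.
Qed.

Lemma s_le_smax j n :
  s j (m + n).+1 <= \big[Num.max/0]_(i < k) (s i m + (size (F i m))%:R) * smax n.
Proof.
have smax_ge1 : 1 <= smax n.
  by apply: le_trans (le_bigmax _ _ j); apply: le_trans (s_ge j n); rewrite ler1n.
have sum_le : \sum_(b <- F j m) s b n <= (size (F j m))%:R * smax n.
  apply: le_trans (ler_sum _ (fun b _ => le_bigmax 0 (fun c => s c n) b)) _.
  by rewrite big_const_seq count_predT iter_addr_0 mulr_natl.
apply: le_trans (_ : (s j m + (size (F j m))%:R) * smax n <= _).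
  by rewrite s_split mulrDl lerD // ler_peMr // ltW ?s_gt0.
by rewrite ler_wpM2r ?(le_trans ler01 smax_ge1) // (le_bigmax 0 (fun i => s i m + _) j).
Qed.

Lemma s_comparable :
  exists2 B, 0 <= B & forall i j n, (m < n)%N -> s j (m + n).+1 <= B * s i n.
Proof.
set D := \big[Num.max/0]_(i < k) (s i m + (size (F i m))%:R).
have D_ge0 : 0 <= D := bigmax_ge_id _ _ _ _.
exists (D * D); first exact: mulr_ge0.
move=> i j n mn; have -> : n = (m + (n - m.+1)).+1 by lia.
set p := (n - m.+1)%N.
apply: le_trans (s_le_smax j _) _; rewrite -mulrA; apply: ler_wpM2l => //.
apply: le_trans (_ : _ <= D * smax p) (ler_wpM2l D_ge0 (smax_le_s i p)).
by apply: bigmax_le => [|c _]; [rewrite mulr_ge0 ?bigmax_ge_id | exact: s_le_smax].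
Qed.

(* Split the (n+m+1)-semiball at a maximiser j at depth m+1: as i is one of the letters
   there, the deficit of ratio i n below max_ratio n is paid for by the variation of
   max_ratio between n and n+m+1. *)
Lemma ratio_lower_bound i : exists C B, [/\ 0 <= C, 0 <= B & forall n, (m < n)%N ->
  max_ratio n - C / n.+1%:R - B * `|max_ratio (n + m.+1) - max_ratio n| <= ratio i n].
Proof.
have [B B_ge0 s_cmp] := s_comparable; set C := \sum_(j < k) L j m.
have C_ge0 : 0 <= C by exact: sumr_ge0.
exists C, B; split => // n mn; rewrite addnS addnC; set N := (m + n).+1.
have [j _ maxE] :=
  Order.TotalTheory.eq_bigmax i xpredT (ratio^~ N) isT (fun j _ => ratio_ge0 j N).
change (max_ratio N = ratio j N) in maxE; rewrite maxE.
set a := max_ratio n; set S := \sum_(b <- F j m) s b n.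
have S_ge0 : 0 <= S by rewrite sumr_ge0 // => b _; rewrite ltW ?s_gt0.
have S_le : S <= s j N by rewrite s_split lerDr ltW ?s_gt0.
have front : a * s i n - L i n <= a * S - \sum_(b <- F j m) L b n.
  rewrite /S mulr_sumr -sumrB; apply: ler_sum_mem (F_full j i) _ => b.
  by rewrite subr_ge0 L_ratioE ler_pM2r ?s_gt0 ?ratio_le_max.
have Ljm : L j m <= C by rewrite /C (bigD1 j) //= lerDl sumr_ge0.
have LjN := L_split j m n; rewrite -/N (L_ratioE j N) in LjN.
have rhoS := ler_wpM2l (ratio_ge0 j N) S_le.
have dev1 : - (`|ratio j N - a| * S) <= (ratio j N - a) * S.
  by rewrite -mulNr ler_wpM2r // lerNnormlW.
have dev2 : `|ratio j N - a| * S <= `|ratio j N - a| * (B * s i n).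
  by rewrite ler_wpM2l // (le_trans S_le) ?s_cmp.
have C_le := ler_div_succ i n C_ge0.
rewrite /ratio ler_pdivlMr ?s_gt0 // -/(ratio j N).
move: (C / n.+1%:R) C_le => c C_le; lra.
Qed.

Theorem ratio_cvg i : ratio i @ \oo --> inf [set x | exists n, x = max_ratio n].
Proof.
have [C [B [C_ge0 B_ge0 lower]]] := ratio_lower_bound i.
have shift_cvg := max_ratio_cvg; rewrite -(cvg_shiftn m.+1) in shift_cvg.
apply: (squeeze_cvgr (h := max_ratio) (f := fun n =>
  max_ratio n - C / n.+1%:R - B * `|max_ratio (n + m.+1) - max_ratio n|)) _ _ max_ratio_cvg.
  near=> n; rewrite lower ?ratio_le_max //; near: n; exact: nbhs_infty_gt.
set l := inf _ in shift_cvg *.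
have -> : l = l - 0 - B * `|l - l| by rewrite subrr normr0 mulr0 !subr0.
apply: cvgB; first by apply: cvgB; [exact: max_ratio_cvg | exact: div_succ_cvg0].
apply: cvgMl_tmp; apply: cvg_norm; apply: cvgB; [exact: shift_cvg | exact: max_ratio_cvg].
Unshelve. all: end_near.
Qed.

End RatioLimit.

Theorem theorem3p6 (R : realType) (k : nat) (K : 'I_k -> 'I_k -> bool)
    (A : finType) (X : set (config K A)) :
  is_tree_shift X -> primitive K ->
  forall i : 'I_k,
    (fun n => pratio R X i n) @ \oo -->
      inf [set x : R | exists n : nat,
             x = \big[Num.max/0%R]_(j < k) pratio R X j n].
Proof.
move=> _ /primitive_front[m front_full] i.
have succ a : exists b, K a b := front_succ (front_full a a).
pose s j n : R := (size (semiball (gen K j) n))%:R.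
have s_ge j n : n.+1%:R <= s j n by rewrite ler_nat (size_semiball_ge succ).
have s_split j n M : s j (n + M).+1 = s j n + \sum_(b <- front K j n) s b M.
  by rewrite /s size_semiball_add natrD natr_sum.
have L_ge0 j n : 0 <= ln (pcount X (gen K j) n)%:R :> R := ln_nat_ge0 _ _.
by have := ratio_cvg s_ge L_ge0 s_split (ln_pcount_split R X) front_full i; apply.
Qed.
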